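(* Let $\mathcal T''=(e,e)+\Delta(\mathfrak g_{-1}\oplus\mathfrak g_0)$, where $\Delta(V)=\{(x,x):x\in V\}$. Then: (1) $\mathcal T''$ is a Poisson submanifold of $(\mathfrak g\times\mathfrak g,\{\cdot,\cdot\}_{\mathcal R})$; (2) the map $\varphi:\mathbb T\to\mathcal T''$, $\varphi(x)=(x,x)$, from the Toda phase space $\mathbb T=e+\mathfrak g_{-1}\oplus\mathfrak g_0$ equipped with the Poisson $R$-bracket $\{\cdot,\cdot\}_R$, is a Poisson isomorphism onto $(\mathcal T'',\{\cdot,\cdot\}_{\mathcal R})$, and for all $1\le i\le\ell$, $0\le k\le m_i+1$ and $x\in\mathbb T$ one has $F_{k,i}(\varphi(x))=\binom{m_i+1}{k}P_i(x)$; thus $\varphi$ pulls back the restriction of $\mathcal F$ to $\mathcal T''$ to (constant multiples of) the Toda family $(P_1,\dots,P_\ell)$.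
   Context: Let $\mathfrak g$ be a complex simple Lie algebra of rank $\ell$ with Killing form $\langle\cdot,\cdot\rangle$. Fix a Cartan subalgebra $\mathfrak h$, simple roots $\alpha_1,\dots,\alpha_\ell$ of the root system $\Phi$, and nonzero root vectors $e_i$ for $\alpha_i$. Set $\mathfrak g_0=\mathfrak h$ and, for $k\neq0$, let $\mathfrak g_k$ be the span of root vectors $e_\alpha$ with $\alpha=\sum_ia_i\alpha_i\in\Phi$, $\sum_ia_i=k$. Write $\mathfrak g_+=\sum_{i\ge0}\mathfrak g_i$, $\mathfrak g_-=\sum_{i<0}\mathfrak g_i$, $P_\pm$ the projections onto $\mathfrak g_\pm$, $R=P_+-P_-$, $e=\sum_{i=1}^\ell e_i$. The Poisson $R$-bracket on $\mathfrak g$ is $\{F,G\}_R(x)=\tfrac12\langle x,[R\nabla_xF,\nabla_xG]+[\nabla_xF,R\nabla_xG]\rangle$ (gradients w.r.t. the Killing form); $\mathbb T=e+\mathfrak g_{-1}\oplus\mathfrak g_0$ is a Poisson submanifold of it. On $\mathfrak g\times\mathfrak g$ use the componentwise Lie bracket and the form $\langle(x_1,y_1),(x_2,y_2)\rangle_2=\langle x_1,x_2\rangle-\langle y_1,y_2\rangle$; $\mathcal R(x,y)=(R(x-y)+y,R(x-y)+x)$ and $\{F,G\}_{\mathcal R}(x,y)=\tfrac12\langle(x,y),[\mathcal R\nabla F,\nabla G]+[\nabla F,\mathcal R\nabla G]\rangle_2$ (gradients w.r.t. $\langle\cdot,\cdot\rangle_2$). Let $P_1,\dots,P_\ell$ be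 homogeneous algebraically independent generators of the $\mathrm{Ad}$-invariant polynomials on $\mathfrak g$, of degrees $m_1+1,\dots,m_\ell+1$, and define $F_{k,i}$ by $P_i(\lambda x-y)=\sum_{k=0}^{m_i+1}(-1)^{m_i+1-k}\lambda^kF_{k,i}(x,y)$ for all $\lambda$; $\mathcal F=(F_{k,i})$. *)

From HB Require Import structures.
From mathcomp Require Import all_boot all_order all_algebra.
From mathcomp Require Import reals.
From mathcomp Require Export complex.
From mathcomp Require Export mpoly.
Set Implicit Arguments. Unset Strict Implicit. Unset Printing Implicit Defensive.
Import GRing.Theory.
Local Open Scope ring_scope.

(* Throughout: F a field, g = 'rV[F]_n (coordinates w.r.t. a fixed basis),
   br : g -> g -> g the Lie bracket, h a subspace given by the row space of a
   matrix H, functionals on g are column vectors a : 'cV_n, a(y) = (y *m a) 0 0. *)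

Definition lie_bracket (F : fieldType) (n : nat)
  (br : 'rV[F]_n -> 'rV[F]_n -> 'rV[F]_n) : Prop :=
  [/\ (forall (a : F) x y z, br (a *: x + y) z = a *: br x z + br y z),
      (forall (a : F) x y z, br z (a *: x + y) = a *: br z x + br z y),
      (forall x, br x x = 0) &
      (forall x y z, br x (br y z) + br y (br z x) + br z (br x y) = 0)].

Definition lie_ideal (F : fieldType) (n : nat)
  (br : 'rV[F]_n -> 'rV[F]_n -> 'rV[F]_n) (I : 'M[F]_n) : Prop :=
  forall x y : 'rV[F]_n, (x <= I)%MS -> (br y x <= I)%MS.

Definition lie_simple (F : fieldType) (n : nat)
  (br : 'rV[F]_n -> 'rV[F]_n -> 'rV[F]_n) : Prop :=
  (exists x y, br x y != 0) /\
  forall I : 'M[F]_n, lie_ideal br I -> \rank I = 0%N \/ \rank I = n.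

Definition ad_mx (F : fieldType) (n : nat)
  (br : 'rV[F]_n -> 'rV[F]_n -> 'rV[F]_n) (x : 'rV[F]_n) : 'M[F]_n :=
  lin1_mx (br x).

Definition killing (F : fieldType) (n : nat)
  (br : 'rV[F]_n -> 'rV[F]_n -> 'rV[F]_n) (x y : 'rV[F]_n) : F :=
  \tr (ad_mx br x *m ad_mx br y).

Definition lie_subalgebra (F : fieldType) (n : nat)
  (br : 'rV[F]_n -> 'rV[F]_n -> 'rV[F]_n) (H : 'M[F]_n) : Prop :=
  forall x y : 'rV[F]_n, (x <= H)%MS -> (y <= H)%MS -> (br x y <= H)%MS.

Fixpoint lbr (F : fieldType) (n : nat)
  (br : 'rV[F]_n -> 'rV[F]_n -> 'rV[F]_n) (x : 'rV[F]_n) (s : seq 'rV[F]_n)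
  : 'rV[F]_n :=
  match s with [::] => x | y :: s' => br y (lbr br x s') end.

Definition lie_nilpotent_sub (F : fieldType) (n : nat)
  (br : 'rV[F]_n -> 'rV[F]_n -> 'rV[F]_n) (H : 'M[F]_n) : Prop :=
  exists N : nat, forall (x : 'rV[F]_n) (s : seq 'rV[F]_n),
    (x <= H)%MS -> all (fun y => (y <= H)%MS) s -> size s = N ->
    lbr br x s = 0.

Definition self_normalizing (F : fieldType) (n : nat)
  (br : 'rV[F]_n -> 'rV[F]_n -> 'rV[F]_n) (H : 'M[F]_n) : Prop :=
  forall x : 'rV[F]_n, (forall y, (y <= H)%MS -> (br x y <= H)%MS) -> (x <= H)%MS.

Definition cartan_subalgebra (F : fieldType) (n : nat)
  (br : 'rV[F]_n -> 'rV[F]_n -> 'rV[F]_n) (H : 'M[F]_n) : Prop :=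
  [/\ lie_subalgebra br H, lie_nilpotent_sub br H & self_normalizing br H].

Definition fv (F : fieldType) (n : nat) (a : 'cV[F]_n) (y : 'rV[F]_n) : F :=
  (y *m a) 0 0.

(* x lies in the weight space of the functional a|_h (x may be 0) *)
Definition rootvec (F : fieldType) (n : nat)
  (br : 'rV[F]_n -> 'rV[F]_n -> 'rV[F]_n) (H : 'M[F]_n) (a : 'cV[F]_n)
  (x : 'rV[F]_n) : Prop :=
  forall y, (y <= H)%MS -> br y x = fv a y *: x.

Definition is_root (F : fieldType) (n : nat)
  (br : 'rV[F]_n -> 'rV[F]_n -> 'rV[F]_n) (H : 'M[F]_n) (a : 'cV[F]_n) : Prop :=
  (exists2 y, (y <= H)%MS & fv a y != 0) /\
  (exists2 x, x != 0 & rootvec br H a x).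

Definition int_comb (F : fieldType) (n l : nat) (alpha : 'I_l -> 'cV[F]_n)
  (c : 'I_l -> int) : 'cV[F]_n := \sum_(i < l) (c i)%:~R *: alpha i.

Definition simple_roots (F : fieldType) (n l : nat)
  (br : 'rV[F]_n -> 'rV[F]_n -> 'rV[F]_n) (H : 'M[F]_n)
  (alpha : 'I_l -> 'cV[F]_n) : Prop :=
  [/\ (forall i, is_root br H (alpha i)),
      (forall c : 'I_l -> F,
         (forall y, (y <= H)%MS -> fv (\sum_(i < l) c i *: alpha i) y = 0) ->
         forall i, c i = 0) &
      (forall a, is_root br H a ->
         exists c : 'I_l -> int,
           ((forall i, 0 <= c i) \/ (forall i, c i <= 0)) /\
           (forall y, (y <= H)%MS -> fv a y = fv (int_comb alpha c) y))].

Definition height_rootvec (F : fieldType) (n l : nat)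
  (br : 'rV[F]_n -> 'rV[F]_n -> 'rV[F]_n) (H : 'M[F]_n)
  (alpha : 'I_l -> 'cV[F]_n) (k : int) (x : 'rV[F]_n) : Prop :=
  exists c : 'I_l -> int,
    \sum_(i < l) c i = k /\ rootvec br H (int_comb alpha c) x.

Definition in_span (F : fieldType) (n : nat) (P : 'rV[F]_n -> Prop)
  (x : 'rV[F]_n) : Prop :=
  exists m (xs : 'I_m -> 'rV[F]_n), (forall j, P (xs j)) /\ x = \sum_(j < m) xs j.

Definition grade (F : fieldType) (n l : nat)
  (br : 'rV[F]_n -> 'rV[F]_n -> 'rV[F]_n) (H : 'M[F]_n)
  (alpha : 'I_l -> 'cV[F]_n) (k : int) (x : 'rV[F]_n) : Prop :=
  (k = 0 /\ (x <= H)%MS) \/ (k <> 0 /\ in_span (height_rootvec br H alpha k) x).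

Definition grade_sum (F : fieldType) (n l : nat)
  (br : 'rV[F]_n -> 'rV[F]_n -> 'rV[F]_n) (H : 'M[F]_n)
  (alpha : 'I_l -> 'cV[F]_n) (S : int -> bool) (x : 'rV[F]_n) : Prop :=
  in_span (fun y => exists2 k, S k & grade br H alpha k y) x.

(* Pp is the projection P_+ onto g_+ = sum_{k>=0} g_k along g_- = sum_{k<0} g_k
   (acting on row vectors: P_+ x = x *m Pp) *)
Definition is_proj_plus (F : fieldType) (n l : nat)
  (br : 'rV[F]_n -> 'rV[F]_n -> 'rV[F]_n) (H : 'M[F]_n)
  (alpha : 'I_l -> 'cV[F]_n) (Pp : 'M[F]_n) : Prop :=
  forall x : 'rV[F]_n,
    grade_sum br H alpha (fun k => 0 <= k) (x *m Pp) /\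
    grade_sum br H alpha (fun k => k < 0) (x - x *m Pp).

Definition Rop (F : fieldType) (n : nat) (Pp : 'M[F]_n) (x : 'rV[F]_n) : 'rV[F]_n :=
  x *m Pp - (x - x *m Pp).

Definition evp (F : fieldType) (n : nat) (p : {mpoly F[n]}) (x : 'rV[F]_n) : F :=
  p.@[fun j => x 0 j].

Definition dif (F : fieldType) (n : nat) (p : {mpoly F[n]}) (x : 'rV[F]_n)
  : 'rV[F]_n := \row_j evp (mderiv j p) x.

Definition gram (F : fieldType) (n : nat) (b : 'rV[F]_n -> 'rV[F]_n -> F)
  : 'M[F]_n := \matrix_(i, j) b (delta_mx 0 i) (delta_mx 0 j).

(* gradient w.r.t. the (symmetric, nondegenerate) form b:
   the vector g with b g v = dp_x v for all v *)
Definition grad (F : fieldType) (n : nat) (b : 'rV[F]_n -> 'rV[F]_n -> F)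
  (p : {mpoly F[n]}) (x : 'rV[F]_n) : 'rV[F]_n :=
  dif p x *m invmx (gram b).

Definition R_bracket (F : fieldType) (n : nat)
  (br : 'rV[F]_n -> 'rV[F]_n -> 'rV[F]_n) (Pp : 'M[F]_n)
  (P Q : {mpoly F[n]}) (x : 'rV[F]_n) : F :=
  let gP := grad (killing br) P x in
  let gQ := grad (killing br) Q x in
  2%:R^-1 * killing br x (br (Rop Pp gP) gQ + br gP (Rop Pp gQ)).

(* g x g modelled as 'rV_(n+n), (x,y) = row_mx x y *)
Definition br2 (F : fieldType) (n : nat)
  (br : 'rV[F]_n -> 'rV[F]_n -> 'rV[F]_n) (u v : 'rV[F]_(n + n)) : 'rV[F]_(n + n) :=
  row_mx (br (lsubmx u) (lsubmx v)) (br (rsubmx u) (rsubmx v)).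

Definition form2 (F : fieldType) (n : nat)
  (br : 'rV[F]_n -> 'rV[F]_n -> 'rV[F]_n) (u v : 'rV[F]_(n + n)) : F :=
  killing br (lsubmx u) (lsubmx v) - killing br (rsubmx u) (rsubmx v).

Definition calR (F : fieldType) (n : nat) (Pp : 'M[F]_n) (u : 'rV[F]_(n + n))
  : 'rV[F]_(n + n) :=
  let x := lsubmx u in let y := rsubmx u in
  row_mx (Rop Pp (x - y) + y) (Rop Pp (x - y) + x).

Definition calR_bracket (F : fieldType) (n : nat)
  (br : 'rV[F]_n -> 'rV[F]_n -> 'rV[F]_n) (Pp : 'M[F]_n)
  (P Q : {mpoly F[n + n]}) (u : 'rV[F]_(n + n)) : F :=
  let gP := grad (form2 br) P u in
  let gQ := grad (form2 br) Q u in
  2%:R^-1 * form2 br u (br2 br (calR Pp gP) gQ + br2 br gP (calR Pp gQ)).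

Definition ham (F : fieldType) (N : nat)
  (B : {mpoly F[N]} -> {mpoly F[N]} -> 'rV[F]_N -> F)
  (Q : {mpoly F[N]}) (u : 'rV[F]_N) : 'rV[F]_N :=
  \row_j B 'X_j Q u.

(* the affine subspace p + W (W a linear subspace, given by its membership
   predicate) is a Poisson submanifold: all Hamiltonian vector fields are
   tangent to it at each of its points *)
Definition poisson_submanifold (F : fieldType) (N : nat)
  (B : {mpoly F[N]} -> {mpoly F[N]} -> 'rV[F]_N -> F)
  (p : 'rV[F]_N) (W : 'rV[F]_N -> Prop) : Prop :=
  forall (Q : {mpoly F[N]}) (u : 'rV[F]_N), W (u - p) -> W (ham B Q u).

Definition diag_index (n : nat) (j : 'I_(n + n)) : 'I_n :=
  match split j with inl a => a | inr b => b end.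

Definition pull_diag (F : fieldType) (n : nat) (Q : {mpoly F[n + n]}) : {mpoly F[n]} :=
  comp_mpoly [tuple 'X_(diag_index j) | j < n + n] Q.

(* Ad-invariance, in its infinitesimal (ad-) form: dp_x([y,x]) = 0 *)
Definition ad_invariant (F : fieldType) (n : nat)
  (br : 'rV[F]_n -> 'rV[F]_n -> 'rV[F]_n) (p : {mpoly F[n]}) : Prop :=
  forall x y : 'rV[F]_n, \sum_(j < n) dif p x 0 j * br y x 0 j = 0.

Definition invariant_generators (F : fieldType) (n l : nat)
  (br : 'rV[F]_n -> 'rV[F]_n -> 'rV[F]_n)
  (P : 'I_l -> {mpoly F[n]}) (m : 'I_l -> nat) : Prop :=
  [/\ (forall i, ad_invariant br (P i)),
      (forall i, P i \is (m i).+1.-homog),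
      (forall Q : {mpoly F[l]}, comp_mpoly [tuple P i | i < l] Q = 0 -> Q = 0) &
      (forall p, ad_invariant br p ->
         exists Q : {mpoly F[l]}, p = comp_mpoly [tuple P i | i < l] Q)].

From HB Require Import structures.
From mathcomp Require Import all_boot all_order all_algebra.
From mathcomp Require Import reals boolp.
From mathcomp Require Import complex mpoly.
From mathcomp Require Import ring zify.
Set Implicit Arguments. Unset Strict Implicit. Unset Printing Implicit Defensive.
Import GRing.Theory Num.Theory.
Local Open Scope ring_scope.

(* The diagonal map x |-> (x, x) intertwines the two brackets because on the
   diagonal everything only depends on differences of gradients: the
   <.,.>_2-gradient (a, b) of Q at (x, x) has a - b equal to the Killing
   gradient of Q o Delta at x, and
   <(x,x), [calR(a,b), (c,d)] + [(a,b), calR(c,d)]>_2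
     = <x, [R(a-b), c-d] + [a-b, R(c-d)]>.
   For the same reason the Hamiltonian vector field of Q at (x, x) is (v, v),
   with v Killing-dual to the linear form c |-> {c, S}_R(x).  Splitting S and c
   along g_+ + g_- and counting heights shows that v lies in g_{-1} + g_0 when
   x lies in e + g_{-1} + g_0, which is the tangency of T''.
   Finally P_i(lam x - x) = (lam - 1)^(m_i+1) P_i(x) by homogeneity, and the
   coefficients of lam^k give F_{k,i}(x, x). *)

Section LinearOf.
Variables (R : pzRingType) (U V : lmodType R) (f : U -> V).
Hypothesis f_lin : forall a x y, f (a *: x + y) = a *: f x + f y.

Definition linear_of : {linear U -> V} :=
  HB.pack f (GRing.isLinear.Build R U V *:%R f f_lin).

End LinearOf.

Section SymmetricForm.
Variables (F : fieldType) (n : nat) (b : 'rV[F]_n -> 'rV[F]_n -> F).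
Hypothesis b_linl : forall a x y z, b (a *: x + y) z = a * b x z + b y z.
Hypothesis b_sym : forall x y, b x y = b y x.

Let bl z : {linear 'rV[F]_n -> F^o} :=
  @linear_of F _ F^o (fun x => b x z) (fun a x y => b_linl a x y z).
Let b_suml (I : Type) (r : seq I) (G : I -> 'rV[F]_n) z :
  b (\sum_(i <- r) G i) z = \sum_(i <- r) b (G i) z.
Proof. exact: (linear_sum (bl z)). Qed.
Let bZl a x z : b (a *: x) z = a * b x z. Proof. exact: (scalarZ (bl z)). Qed.

Lemma mulmx_gramE u j : (u *m gram b) 0 j = b u (delta_mx 0 j).
Proof.
rewrite {2}(row_sum_delta u) b_suml mxE; apply: eq_bigr => i _.
by rewrite bZl mxE.
Qed.

Lemma form_gramE u v : b u v = (u *m gram b *m v^T) 0 0.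
Proof.
rewrite mxE {1}(row_sum_delta v) (b_sym u) b_suml; apply: eq_bigr => j _.
by rewrite bZl b_sym -mulmx_gramE !mxE mulrC.
Qed.

Lemma gram_tr : (gram b)^T = gram b.
Proof. by apply/matrixP => i j; rewrite !mxE b_sym. Qed.

End SymmetricForm.

Section LieAlgebra.
Variables (F : fieldType) (n : nat) (br : 'rV[F]_n -> 'rV[F]_n -> 'rV[F]_n).
Hypothesis hL : lie_bracket br.

Let br_linl a x y z : br (a *: x + y) z = a *: br x z + br y z.
Proof. by case: hL. Qed.
Let br_linr a x y z : br z (a *: x + y) = a *: br z x + br z y.
Proof. by case: hL. Qed.
Let bl z := linear_of (fun a x y => br_linl a x y z).
Let brr z := linear_of (fun a x y => br_linr a x y z).

Lemma lie0l z : br 0 z = 0. Proof. exact: (linear0 (bl z)). Qed.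
Lemma lie0r z : br z 0 = 0. Proof. exact: (linear0 (brr z)). Qed.
Lemma lieDl x y z : br (x + y) z = br x z + br y z. Proof. exact: (linearD (bl z)). Qed.
Lemma lieDr x y z : br z (x + y) = br z x + br z y. Proof. exact: (linearD (brr z)). Qed.
Lemma lieZl a x z : br (a *: x) z = a *: br x z. Proof. exact: (linearZZ (bl z)). Qed.
Lemma lieZr a x z : br z (a *: x) = a *: br z x. Proof. exact: (linearZZ (brr z)). Qed.
Lemma lieNl x z : br (- x) z = - br x z. Proof. exact: (linearN (bl z)). Qed.
Lemma lieNr x z : br z (- x) = - br z x. Proof. exact: (linearN (brr z)). Qed.
Lemma lieBl x y z : br (x - y) z = br x z - br y z. Proof. exact: (linearB (bl z)). Qed.
Lemma lie_sumr (I : Type) (r : seq I) (P : pred I) (G : I -> 'rV[F]_n) z :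
  br z (\sum_(i <- r | P i) G i) = \sum_(i <- r | P i) br z (G i).
Proof. exact: (linear_sum (brr z)). Qed.

Lemma lie_anticomm x y : br x y = - br y x.
Proof.
have [_ _ brxx _] := hL; apply/eqP; rewrite -addr_eq0.
have := brxx (x + y); rewrite lieDl !lieDr !brxx add0r addr0.
by move=> ->.
Qed.

Lemma lie_jacobi a b d : br (br a b) d = br a (br b d) - br b (br a d).
Proof.
have [_ _ _ jac] := hL; have := jac a b d.
rewrite (lie_anticomm d a) lieNr (lie_anticomm d) => /eqP.
by rewrite subr_eq0 => /eqP.
Qed.

Lemma ad_mxE x v : v *m ad_mx br x = br x v.
Proof.
rewrite {2}(row_sum_delta v) lie_sumr; apply/rowP => j.
by rewrite mxE summxE; apply: eq_bigr => i _; rewrite lieZr !mxE.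
Qed.

Lemma ad_mx_lin a x y : ad_mx br (a *: x + y) = a *: ad_mx br x + ad_mx br y.
Proof. by apply/matrixP => i j; rewrite /ad_mx !mxE br_linl !mxE. Qed.

Lemma ad_mx_bracket a b :
  ad_mx br (br a b) = ad_mx br b *m ad_mx br a - ad_mx br a *m ad_mx br b.
Proof.
by apply/row_matrixP => i; rewrite !rowE mulmxBr !mulmxA !ad_mxE lie_jacobi.
Qed.

Lemma killing_linl a x y z :
  killing br (a *: x + y) z = a * killing br x z + killing br y z.
Proof. by rewrite /killing ad_mx_lin mulmxDl -scalemxAl mxtraceD mxtraceZ. Qed.

Lemma killing_sym x y : killing br x y = killing br y x.
Proof. exact: mxtrace_mulC. Qed.

Lemma killing_invariant a b c : killing br (br a b) c = killing br a (br b c).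
Proof.
rewrite /killing !ad_mx_bracket mulmxBl mulmxBr !raddfB /=.
congr (_ - _); last by rewrite mulmxA.
by rewrite -mulmxA mxtrace_mulC mulmxA.
Qed.

Let kl z : {linear 'rV[F]_n -> F^o} :=
  @linear_of F _ F^o (fun x => killing br x z) (fun a x y => killing_linl a x y z).

Lemma killing0l z : killing br 0 z = 0. Proof. exact: (linear0 (kl z)). Qed.
Lemma killingDl x y z : killing br (x + y) z = killing br x z + killing br y z.
Proof. exact: (linearD (kl z)). Qed.
Lemma killingZl a x z : killing br (a *: x) z = a * killing br x z.
Proof. exact: (scalarZ (kl z)). Qed.
Lemma killingNl x z : killing br (- x) z = - killing br x z.
Proof. exact: (linearN (kl z)). Qed.
Lemma killing0r z : killing br z 0 = 0. Proof. by rewrite killing_sym killing0l. Qed.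
Lemma killingDr x y z : killing br z (x + y) = killing br z x + killing br z y.
Proof. by rewrite !(killing_sym z) killingDl. Qed.
Lemma killingZr a x z : killing br z (a *: x) = a * killing br z x.
Proof. by rewrite !(killing_sym z) killingZl. Qed.
Lemma killingNr x z : killing br z (- x) = - killing br z x.
Proof. by rewrite !(killing_sym z) killingNl. Qed.

Lemma killing_gramE u v : killing br u v = (u *m gram (killing br) *m v^T) 0 0.
Proof. exact: (form_gramE killing_linl killing_sym). Qed.

(* The radical of the Killing form is an ideal.  Excluding K = 0 would need
   Cartan's criterion; that case is harmless for the theorem. *)
Lemma killing_gram_unit_or_0 :
  lie_simple br -> gram (killing br) \in unitmx \/ gram (killing br) = 0.
Proof.
move=> [_ simple]; set K := gram (killing br).
have radical_ideal : lie_ideal br (kermx K).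
  move=> x y /sub_kermxP xK; apply/sub_kermxP/rowP => j.
  rewrite (mulmx_gramE killing_linl) mxE lie_anticomm killingNl killing_invariant.
  by rewrite killing_gramE xK !mul0mx mxE oppr0.
have := rank_leq_row K; case: (simple _ radical_ideal); rewrite mxrank_ker => rk.
  by left; rewrite -row_free_unit /row_free; lia.
by right; apply/eqP; rewrite -mxrank_eq0; lia.
Qed.

End LieAlgebra.

Section DiagonalPullback.
Variables (F : fieldType) (n : nat).

Lemma evp_mderivX (N : nat) (j k : 'I_N) (x : 'rV[F]_N) :
  evp (mderiv j 'X_k) x = (k == j)%:R.
Proof.
rewrite /evp mderivX mevalZ mnm1E; case: eqVneq => [->|_]; last by rewrite mul0r.
by rewrite mevalX big1 ?mulr1 // => i _; rewrite mnmBE subnn expr0.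
Qed.

Lemma dif_X (N : nat) (k : 'I_N) (u : 'rV[F]_N) : dif 'X_k u = delta_mx 0 k.
Proof. by apply/rowP => i; rewrite !mxE evp_mderivX eq_sym. Qed.

Lemma evp_pull_diag (Q : {mpoly F[n + n]}) x :
  evp (pull_diag Q) x = evp Q (row_mx x x).
Proof.
rewrite /evp /pull_diag comp_mpoly_meval; apply: meval_eq => j.
by rewrite tnth_mktuple mevalXU mxE /diag_index; case: split.
Qed.

Lemma pull_diagX (k : 'I_(n + n)) : pull_diag 'X_k = 'X_(diag_index k) :> {mpoly F[n]}.
Proof. by rewrite /pull_diag comp_mpolyXU -tnth_nth tnth_mktuple. Qed.

Lemma evp_mderiv_pull_diag (j : 'I_n) (Q : {mpoly F[n + n]}) x :
  evp (mderiv j (pull_diag Q)) x =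
  evp (mderiv (lshift n j) Q) (row_mx x x) + evp (mderiv (rshift n j) Q) (row_mx x x).
Proof.
pose chain (Q : {mpoly F[n + n]}) := forall x, evp (mderiv j (pull_diag Q)) x =
  evp (mderiv (lshift n j) Q) (row_mx x x) + evp (mderiv (rshift n j) Q) (row_mx x x).
have chain1 : chain 1.
  by move=> y; rewrite /pull_diag rmorph1 -mpolyC1 !mderivC /evp !meval0 addr0.
have chainD p q : chain p -> chain q -> chain (p + q).
  move=> cp cq y; rewrite /pull_diag raddfD /= !mderivD /evp !mevalD.
  by move: (cp y) (cq y); rewrite /evp /pull_diag => -> ->; ring.
have chainZ c p : chain p -> chain (c *: p).
  move=> cp y; rewrite /pull_diag comp_mpolyZ !mderivZ /evp !mevalZ.
  by move: (cp y); rewrite /evp /pull_diag => ->; ring.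
have chainM p q : chain p -> chain q -> chain (p * q).
  move=> cp cq y; rewrite /pull_diag rmorphM /= !mderivM /evp !mevalD !mevalM.
  move: (cp y) (cq y) (evp_pull_diag p y) (evp_pull_diag q y).
  by rewrite /evp /pull_diag => -> -> -> ->; ring.
have chainX k : chain 'X_k.
  move=> y; rewrite pull_diagX !evp_mderivX /diag_index.
  by case: (split_ordP k) => a ->;
    rewrite ?eq_lshift ?eq_rshift ?eq_lrshift ?eq_rlshift ?add0r ?addr0.
move: x; elim/mpolyind: Q => [|c m p _ _ chain_p].
  by move=> y; rewrite /pull_diag raddf0 !mderiv0 /evp !meval0 addr0.
apply: chainD => //; apply: chainZ; rewrite mpolyXE_id.
apply: (big_ind chain chain1 chainM) => i _.
elim: (m i) => [|e IHe]; first by rewrite expr0.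
by rewrite exprS; apply: chainM.
Qed.

Lemma dif_pull_diag (Q : {mpoly F[n + n]}) x :
  dif (pull_diag Q) x = lsubmx (dif Q (row_mx x x)) + rsubmx (dif Q (row_mx x x)).
Proof. by apply/rowP => j; rewrite !mxE evp_mderiv_pull_diag. Qed.

End DiagonalPullback.

Definition row_diff (F : fieldType) (n : nat) (g : 'rV[F]_(n + n)) : 'rV[F]_n :=
  lsubmx g - rsubmx g.

Definition R_pairing (F : fieldType) (n : nat)
  (br : 'rV[F]_n -> 'rV[F]_n -> 'rV[F]_n) (Pp : 'M[F]_n) (x a b : 'rV[F]_n) : F :=
  2%:R^-1 * killing br x (br (Rop Pp a) b + br a (Rop Pp b)).

(* When the Killing form is nondegenerate, the vector v with
   killing v c = R_pairing x c S for all c. *)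
Definition R_pairing_dual (F : fieldType) (n : nat)
  (br : 'rV[F]_n -> 'rV[F]_n -> 'rV[F]_n) (Pp : 'M[F]_n) (x S : 'rV[F]_n) : 'rV[F]_n :=
  \row_j R_pairing br Pp x (delta_mx 0 j *m invmx (gram (killing br))) S.

Section DeltaBlocks.
Variables (F : fieldType) (n : nat) (i : 'I_n).

Lemma lsubmx_delta_lshift : lsubmx (delta_mx 0 (lshift n i) : 'rV[F]_(n + n)) = delta_mx 0 i.
Proof. by apply/rowP => k; rewrite !mxE eq_lshift. Qed.
Lemma rsubmx_delta_lshift : rsubmx (delta_mx 0 (lshift n i) : 'rV[F]_(n + n)) = 0.
Proof. by apply/rowP => k; rewrite !mxE eq_rlshift andbF. Qed.
Lemma lsubmx_delta_rshift : lsubmx (delta_mx 0 (rshift n i) : 'rV[F]_(n + n)) = 0.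
Proof. by apply/rowP => k; rewrite !mxE eq_lrshift andbF. Qed.
Lemma rsubmx_delta_rshift : rsubmx (delta_mx 0 (rshift n i) : 'rV[F]_(n + n)) = delta_mx 0 i.
Proof. by apply/rowP => k; rewrite !mxE eq_rshift. Qed.

End DeltaBlocks.

Section DoubleBracket.
Variables (F : fieldType) (n : nat) (br : 'rV[F]_n -> 'rV[F]_n -> 'rV[F]_n).
Hypothesis hL : lie_bracket br.
Variable Pp : 'M[F]_n.
Local Notation K := (gram (killing br)).
Local Notation K' := (invmx (gram (killing br))).

Lemma gram_form2 : gram (form2 br) = block_mx K 0 0 (- K).
Proof.
apply/matrixP => i j; rewrite mxE /form2.
case: (split_ordP i) => a ->; case: (split_ordP j) => b ->;
rewrite ?block_mxEul ?block_mxEur ?block_mxEdl ?block_mxEdr ?mxE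
  ?lsubmx_delta_lshift ?rsubmx_delta_lshift ?lsubmx_delta_rshift ?rsubmx_delta_rshift
  ?(killing0l hL) ?(killing0r hL) ?subr0 ?sub0r ?oppr0 //.
Qed.

Lemma invmx_gram_form2 : invmx (gram (form2 br)) = block_mx K' 0 0 (- K').
Proof.
rewrite gram_form2 -scaleN1r.
have unitN1 : (-1 : F) \is a GRing.unit by rewrite unitrN1.
have [K_unit | K_sing] := boolP (K \in unitmx).
  rewrite invmx_block_diag; last by rewrite block_diag_mx_unit unitmxZ // K_unit.
  by rewrite invmxZ ?unitmxZ // invrN1 scaleN1r.
rewrite !invmx_out //=; first by rewrite scaleN1r.
by rewrite inE block_diag_mx_unit (negbTE K_sing).
Qed.

Lemma row_diff_grad_form2 (Q : {mpoly F[n + n]}) u :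
  row_diff (grad (form2 br) Q u) = (lsubmx (dif Q u) + rsubmx (dif Q u)) *m K'.
Proof.
set d := dif Q u; rewrite /row_diff /grad invmx_gram_form2 -[d in d *m _]hsubmxK.
by rewrite mul_row_block !mulmx0 addr0 add0r row_mxKl row_mxKr mulmxN opprK mulmxDl.
Qed.

Lemma grad_pull_diag (Q : {mpoly F[n + n]}) x :
  grad (killing br) (pull_diag Q) x = row_diff (grad (form2 br) Q (row_mx x x)).
Proof. by rewrite row_diff_grad_form2 /grad dif_pull_diag. Qed.

Lemma form2_calR_diag x gP gQ :
  form2 br (row_mx x x) (br2 br (calR Pp gP) gQ + br2 br gP (calR Pp gQ)) =
  killing br x (br (Rop Pp (row_diff gP)) (row_diff gQ)
              + br (row_diff gP) (Rop Pp (row_diff gQ))).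
Proof.
rewrite /form2 /br2 /calR /row_diff !row_mxKl !row_mxKr add_row_mx row_mxKl row_mxKr.
rewrite -(killingNr hL) -(killingDr hL); congr (killing br x _).
move: (Rop Pp (lsubmx gP - rsubmx gP)) (Rop Pp (lsubmx gQ - rsubmx gQ)) => r1 r2.
move: (lsubmx gP) (rsubmx gP) (lsubmx gQ) (rsubmx gQ) => p1 p2 q1 q2.
have cancel (a b c d e f : 'rV[F]_n) :
    (a + b) + (c + d) - ((e + d) + (f + b)) = (a - e) + (c - f).
  rewrite !opprD !addrA (addrAC _ (- e)) (addrK d) (addrAC _ (- f)) (addrAC _ (- e)).
  by rewrite (addrAC (a + b) c) (addrK b) (addrAC a c).
by rewrite !(lieDl hL) !(lieDr hL) !(lieNl hL) !(lieNr hL) cancel.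
Qed.

Lemma calR_bracket_diag (Q1 Q2 : {mpoly F[n + n]}) x :
  calR_bracket br Pp Q1 Q2 (row_mx x x) =
  R_pairing br Pp x (row_diff (grad (form2 br) Q1 (row_mx x x)))
                    (row_diff (grad (form2 br) Q2 (row_mx x x))).
Proof. by rewrite /calR_bracket /= form2_calR_diag. Qed.

Lemma R_bracket_pull_diag (Q1 Q2 : {mpoly F[n + n]}) x :
  R_bracket br Pp (pull_diag Q1) (pull_diag Q2) x = calR_bracket br Pp Q1 Q2 (row_mx x x).
Proof. by rewrite calR_bracket_diag /R_bracket /= !grad_pull_diag. Qed.

Lemma ham_calR_diag (Q : {mpoly F[n + n]}) x :
  ham (calR_bracket br Pp) Q (row_mx x x) =
  row_mx (R_pairing_dual br Pp x (row_diff (grad (form2 br) Q (row_mx x x))))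
         (R_pairing_dual br Pp x (row_diff (grad (form2 br) Q (row_mx x x)))).
Proof.
apply/rowP => k; rewrite !mxE calR_bracket_diag row_diff_grad_form2 dif_X.
case: (split_ordP k) => j ->; rewrite ?row_mxEl ?row_mxEr mxE.
  by rewrite lsubmx_delta_lshift rsubmx_delta_lshift addr0.
by rewrite lsubmx_delta_rshift rsubmx_delta_rshift add0r.
Qed.

End DoubleBracket.

Section Span.
Variables (F : fieldType) (n : nat).
Implicit Types (P Q : 'rV[F]_n -> Prop).

Lemma in_span_ind P (G : 'rV[F]_n -> Prop) x :
  G 0 -> (forall a b, G a -> G b -> G (a + b)) -> (forall v, P v -> G v) ->
  in_span P x -> G x.
Proof. by move=> G0 GD GP [m [xs [Pxs ->]]]; apply: big_ind => // i _; apply: GP. Qed.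

Lemma in_span0 P : in_span P 0.
Proof. by exists 0%N, (fun _ => 0); split; [case | rewrite big_ord0]. Qed.

Lemma in_span1 P v : P v -> in_span P v.
Proof. by move=> Pv; exists 1%N, (fun _ => v); split => //; rewrite big_ord1. Qed.

Lemma in_spanD P a b : in_span P a -> in_span P b -> in_span P (a + b).
Proof.
move=> [m1 [xs1 [P1 ->]]] [m2 [xs2 [P2 ->]]].
exists (m1 + m2)%N, (fun k => match split k with inl i => xs1 i | inr j => xs2 j end).
split; first by move=> k; case: split.
rewrite big_split_ord /=; congr (_ + _); apply: eq_bigr => i _.
  by have /= -> := unsplitK (inl i : 'I_m1 + 'I_m2).
by have /= -> := unsplitK (inr i : 'I_m1 + 'I_m2).
Qed.

Lemma in_span_map P Q (f : 'rV[F]_n -> 'rV[F]_n) x :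
  f 0 = 0 -> (forall a b, f (a + b) = f a + f b) ->
  (forall v, P v -> in_span Q (f v)) -> in_span P x -> in_span Q (f x).
Proof.
move=> f0 fD PQ; apply: (@in_span_ind P (fun y => in_span Q (f y))) => //.
- by rewrite f0; apply: in_span0.
- by move=> a b Qa Qb; rewrite fD; apply: in_spanD.
Qed.

Lemma sub_in_span P Q x : (forall v, P v -> Q v) -> in_span P x -> in_span Q x.
Proof.
move=> PQ; apply: (@in_span_map P Q id) => // v Pv.
by apply: in_span1; apply: PQ.
Qed.

Lemma in_span_submx P (M : 'M[F]_n) (f : 'rV[F]_n -> 'rV[F]_n) x :
  f 0 = 0 -> (forall a b, f (a + b) = f a + f b) ->
  (forall v, P v -> (f v <= M)%MS) -> in_span P x -> (f x <= M)%MS.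
Proof.
move=> f0 fD PM; apply: (@in_span_ind P (fun y => (f y <= M)%MS)) => //.
- by rewrite f0 sub0mx.
- by move=> a b Ma Mb; rewrite fD addmx_sub.
Qed.

Lemma in_span_eq0 P (g : 'rV[F]_n -> F) x :
  g 0 = 0 -> (forall a b, g (a + b) = g a + g b) ->
  (forall v, P v -> g v = 0) -> in_span P x -> g x = 0.
Proof.
move=> g0 gD gP; apply: (@in_span_ind P (fun y => g y = 0)) => //.
by move=> a b ga gb; rewrite gD ga gb addr0.
Qed.

End Span.

Lemma signed_sum_eq0 (I : finType) (c : I -> int) :
  (forall i, 0 <= c i) \/ (forall i, c i <= 0) -> \sum_i c i = 0 -> forall i, c i = 0.
Proof.
move=> [c_ge0|c_le0] sum0 i; first exact: (psumr_eq0P (fun i _ => c_ge0 i) sum0).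
have sumN0 : \sum_j - c j = 0 by rewrite sumrN sum0 oppr0.
have ge0 j : predT j -> 0 <= - c j by rewrite oppr_ge0.
by apply/eqP; rewrite -oppr_eq0 (psumr_eq0P ge0 sumN0).
Qed.

Section Grading.
Variables (F : numFieldType) (n l : nat) (br : 'rV[F]_n -> 'rV[F]_n -> 'rV[F]_n).
Variables (H : 'M[F]_n) (alpha : 'I_l -> 'cV[F]_n).
Hypothesis hL : lie_bracket br.
Hypothesis hC : cartan_subalgebra br H.
Hypothesis hR : simple_roots br H alpha.
Local Notation grade := (grade br H alpha).
Local Notation grade_sum := (grade_sum br H alpha).

Lemma fvD (a b : 'cV[F]_n) y : fv (a + b) y = fv a y + fv b y.
Proof. by rewrite /fv mulmxDr mxE. Qed.
Lemma fvB (a b : 'cV[F]_n) y : fv (a - b) y = fv a y - fv b y.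
Proof. by rewrite /fv mulmxBr !mxE. Qed.
Lemma fv0 y : fv (0 : 'cV[F]_n) y = 0.
Proof. by rewrite /fv mulmx0 mxE. Qed.

Lemma int_combD (c c' : 'I_l -> int) :
  int_comb alpha (fun i => c i + c' i) = int_comb alpha c + int_comb alpha c'.
Proof. by rewrite /int_comb -big_split; apply: eq_bigr => i _; rewrite intrD scalerDl. Qed.
Lemma int_combB (c c' : 'I_l -> int) :
  int_comb alpha (fun i => c i - c' i) = int_comb alpha c - int_comb alpha c'.
Proof. by rewrite /int_comb -sumrB; apply: eq_bigr => i _; rewrite intrB scalerBl. Qed.
Lemma int_comb0 : int_comb alpha (fun _ => 0) = 0.
Proof. by rewrite /int_comb big1 // => i _; rewrite scale0r. Qed.
Lemma int_comb_delta i : int_comb alpha (fun j => (j == i)%:Z) = alpha i.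
Proof.
rewrite /int_comb (bigD1 i) //= eqxx scale1r big1 ?addr0 // => j ji.
by rewrite (negbTE ji) scale0r.
Qed.

Lemma rootvecZ a x s : rootvec br H a x -> rootvec br H a (s *: x).
Proof. by move=> xa y yH; rewrite (lieZr hL) xa // !scalerA mulrC. Qed.

Lemma rootvec_bracket a b x z :
  rootvec br H a x -> rootvec br H b z -> rootvec br H (a + b) (br x z).
Proof.
move=> xa zb y yH; have := lie_jacobi hL y x z.
move/eqP; rewrite eq_sym subr_eq => /eqP ->.
by rewrite (zb y yH) (xa y yH) (lieZl hL) (lieZr hL) fvD scalerDl.
Qed.

Lemma int_comb_eq0 (c : 'I_l -> int) :
  (forall y, (y <= H)%MS -> fv (int_comb alpha c) y = 0) -> forall i, c i = 0.
Proof.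
case: hR => _ indep _ c0 i; have := indep (fun i => (c i)%:~R) c0 i.
by move/eqP; rewrite intr_eq0 => /eqP.
Qed.

(* If [r, r'] has weight zero on h it commutes with h, hence lies in h
   (self-normalization); otherwise its weight would be a root of height 0. *)
Lemma bracket_rootvec_height0 (c c' : 'I_l -> int) r r' :
  rootvec br H (int_comb alpha c) r -> rootvec br H (int_comb alpha c') r' ->
  \sum_i (c i + c' i) = 0 -> (br r r' <= H)%MS.
Proof.
move=> rc rc' height0; set g := int_comb alpha (fun i => c i + c' i).
have rr'g : rootvec br H g (br r r') by rewrite /g int_combD; apply: rootvec_bracket.
have [g0 | g_neq0] := pselect (forall y, (y <= H)%MS -> fv g y = 0).
  have [_ _ self_norm] := hC; apply: self_norm => y yH.
  by rewrite lie_anticomm // (rr'g y yH) (g0 y yH) scale0r oppr0 sub0mx.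
have [-> | rr'_neq0] := eqVneq (br r r') 0; first by rewrite sub0mx.
have [_ _ root_comb] := hR.
have g_root : is_root br H g.
  split; last by exists (br r r').
  by have /existsNP [y /not_implyP [yH /eqP gy]] := g_neq0; exists y.
have [c'' [c''_sign c''_g]] := root_comb g g_root.
have c''E i : c'' i = c i + c' i.
  apply/eqP; rewrite eq_sym -subr_eq0; apply/eqP; move: i; apply: int_comb_eq0 => y yH.
  by rewrite int_combB fvB c''_g // subrr.
have c''0 := signed_sum_eq0 c''_sign.
case: g_neq0 => y yH; rewrite c''_g // (_ : c'' = fun=> 0) ?int_comb0 ?fv0 //.
by apply: funext => i; apply: c''0; rewrite -[RHS]height0; apply: eq_bigr => j _; apply: c''E.
Qed.

Lemma killing_rootvec_eq0 (c c' : 'I_l -> int) r r' :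
  rootvec br H (int_comb alpha c) r -> rootvec br H (int_comb alpha c') r' ->
  \sum_i (c i + c' i) != 0 -> killing br r r' = 0.
Proof.
move=> rc rc' height_neq0; apply/eqP; apply: contraNT height_neq0 => Krr'_neq0.
suff cc'0 i : c i + c' i = 0 by rewrite big1.
move: i; apply: int_comb_eq0 => y yH; rewrite int_combD fvD.
have : killing br (br y r) r' = - killing br r (br y r').
  by rewrite lie_anticomm // (killingNl hL) killing_invariant.
rewrite (rc y yH) (rc' y yH) (killingZl hL) (killingZr hL).
move/eqP; rewrite -addr_eq0 -mulrDl mulf_eq0 (negbTE Krr'_neq0) orbF.
by move/eqP.
Qed.

(* killing ((ad y)^k a) r = (- alpha(y))^k killing a r, and (ad y)^N a = 0
   by nilpotency of h. *)
Lemma killing_cartan_rootvec_eq0 (c : 'I_l -> int) a r :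
  (a <= H)%MS -> rootvec br H (int_comb alpha c) r -> \sum_i c i != 0 ->
  killing br a r = 0.
Proof.
have [_ [N nilp] _] := hC; move=> aH rc height_neq0.
apply/eqP; apply: contraNT height_neq0 => Kar_neq0.
suff c0 i : c i = 0 by rewrite big1.
move: i; apply: int_comb_eq0 => y yH.
have iterE k : killing br (lbr br a (nseq k y)) r =
               (- fv (int_comb alpha c) y) ^+ k * killing br a r.
  elim: k => [|k IHk] /=; first by rewrite expr0 mul1r.
  rewrite lie_anticomm // (killingNl hL) killing_invariant // (rc y yH).
  by rewrite (killingZr hL) IHk exprS; ring.
have := iterE N; rewrite nilp ?size_nseq ?all_nseq ?yH ?orbT // (killing0l hL).
move/eqP; rewrite eq_sym mulf_eq0 (negbTE Kar_neq0) orbF expf_eq0 oppr_eq0.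
by case/andP=> _ /eqP.
Qed.

Lemma grade_bracket i j a b : grade i a -> grade j b -> grade (i + j) (br a b).
Proof.
case=> [[-> aH]|[i_neq0 a_span]]; case=> [[-> bH]|[j_neq0 b_span]].
- by left; rewrite addr0; split=> //; have [sub _ _] := hC; apply: sub.
- right; rewrite add0r; split => //.
  apply: (in_span_map (lie0r hL a) (fun u v => lieDr hL u v a) _ b_span) => v [c [ci vc]].
  by apply: in_span1; exists c; split=> //; rewrite (vc a aH); apply: rootvecZ.
- right; rewrite addr0; split => //.
  apply: (in_span_map (lie0l hL b) (fun u v => lieDl hL u v b) _ a_span) => v [c [ci vc]].
  apply: in_span1; exists c; split=> //.
  by rewrite lie_anticomm // (vc b bH) -scaleNr; apply: rootvecZ.
have [ij0 | ij_neq0] := eqVneq (i + j) 0.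
  left; split=> //.
  apply: (in_span_submx (lie0l hL b) (fun u v => lieDl hL u v b) _ a_span) => v [c [ci vc]].
  apply: (in_span_submx (lie0r hL v) (fun u w => lieDr hL u w v) _ b_span) => w [c' [c'j wc']].
  by apply: (bracket_rootvec_height0 vc wc'); rewrite big_split /= ci c'j.
right; split; first by apply/eqP.
apply: (in_span_map (lie0l hL b) (fun u v => lieDl hL u v b) _ a_span) => v [c [ci vc]].
apply: (in_span_map (lie0r hL v) (fun u w => lieDr hL u w v) _ b_span) => w [c' [c'j wc']].
apply: in_span1; exists (fun k => c k + c' k); split; first by rewrite big_split /= ci c'j.
by rewrite int_combD; apply: rootvec_bracket.
Qed.

Lemma grade_orthogonal i j a b : grade i a -> grade j b -> i + j != 0 -> killing br a b = 0.
Proof.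
case=> [[-> aH]|[_ a_span]]; case=> [[-> bH]|[_ b_span]] ij_neq0.
- by rewrite addr0 eqxx in ij_neq0.
- rewrite add0r in ij_neq0.
  apply: (in_span_eq0 (killing0r hL a) (fun u v => killingDr hL u v a) _ b_span).
  by move=> v [c [cj vc]]; apply: (killing_cartan_rootvec_eq0 aH vc); rewrite cj.
- rewrite addr0 in ij_neq0.
  apply: (in_span_eq0 (killing0l hL b) (fun u v => killingDl hL u v b) _ a_span).
  move=> v [c [ci vc]]; rewrite killing_sym.
  by apply: (killing_cartan_rootvec_eq0 bH vc); rewrite ci.
apply: (in_span_eq0 (killing0l hL b) (fun u v => killingDl hL u v b) _ a_span) => v [c [ci vc]].
apply: (in_span_eq0 (killing0r hL v) (fun u w => killingDr hL u w v) _ b_span) => w [c' [c'j wc']].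
by apply: (killing_rootvec_eq0 vc wc'); rewrite big_split /= ci c'j.
Qed.

Lemma grade_sum1 (p : pred int) k v : p k -> grade k v -> grade_sum p v.
Proof. by move=> pk kv; apply: in_span1; exists k. Qed.

Lemma grade_sum_split (p q r : pred int) x :
  (forall k, p k -> q k || r k) -> grade_sum p x ->
  exists y z, [/\ x = y + z, grade_sum q y & grade_sum r z].
Proof.
move=> pqr; apply: (in_span_ind (G := fun x =>
  exists y z, [/\ x = y + z, grade_sum q y & grade_sum r z])).
- by exists 0, 0; rewrite addr0; split=> //; apply: in_span0.
- move=> a b [y1 [z1 [-> qy1 rz1]]] [y2 [z2 [-> qy2 rz2]]].
  by exists (y1 + y2), (z1 + z2); rewrite addrACA; split=> //; apply: in_spanD.
move=> v [k pk kv]; have /orP[qk | rk] := pqr k pk.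
  by exists v, 0; rewrite addr0; split; [|apply: grade_sum1 kv|apply: in_span0].
by exists 0, v; rewrite add0r; split; [|apply: in_span0|apply: grade_sum1 kv].
Qed.

Lemma grade_sum_bracket (p q r : pred int) a b :
  (forall i j, p i -> q j -> r (i + j)) ->
  grade_sum p a -> grade_sum q b -> grade_sum r (br a b).
Proof.
move=> pqr a_span b_span.
apply: (in_span_map (lie0l hL b) (fun u v => lieDl hL u v b) _ a_span) => v [i pi iv].
apply: (in_span_map (lie0r hL v) (fun u w => lieDr hL u w v) _ b_span) => w [j qj jw].
by apply: (grade_sum1 _ (grade_bracket iv jw)); apply: pqr.
Qed.

Lemma grade_sum_orthogonal (p q : pred int) a b :
  (forall i j, p i -> q j -> i + j != 0) ->
  grade_sum p a -> grade_sum q b -> killing br a b = 0.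
Proof.
move=> pq a_span b_span.
apply: (in_span_eq0 (killing0l hL b) (fun u v => killingDl hL u v b) _ a_span).
move=> v [i pi iv].
apply: (in_span_eq0 (killing0r hL v) (fun u w => killingDr hL u w v) _ b_span).
by move=> w [j qj jw]; apply: (grade_orthogonal iv jw); apply: pq.
Qed.

Lemma grade_simple_rootvec i x : rootvec br H (alpha i) x -> grade 1 x.
Proof.
move=> xi; right; split=> //; apply: in_span1; exists (fun j => (j == i)%:Z).
split; last by rewrite int_comb_delta.
by rewrite (bigD1 i) //= eqxx big1 ?addr0 // => j ji; rewrite (negbTE ji).
Qed.

End Grading.

Section TodaTangency.
Variables (F : numFieldType) (n l : nat) (br : 'rV[F]_n -> 'rV[F]_n -> 'rV[F]_n).
Variables (H : 'M[F]_n) (alpha : 'I_l -> 'cV[F]_n) (es : 'I_l -> 'rV[F]_n) (Pp : 'M[F]_n).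
Hypothesis hL : lie_bracket br.
Hypothesis hC : cartan_subalgebra br H.
Hypothesis hR : simple_roots br H alpha.
Hypothesis hes : forall i, rootvec br H (alpha i) (es i).
Hypothesis hPp : is_proj_plus br H alpha Pp.
Local Notation grade_sum := (grade_sum br H alpha).
Local Notation e := (\sum_(i < l) es i).
Local Notation T := (grade_sum (fun k => (k == -1) || (k == 0))).

Lemma toda_grade_sum x : T (x - e) -> grade_sum (fun k => (-1 <= k) && (k <= 1)) x.
Proof.
move=> xT; rewrite -(subrK e x); apply: in_spanD.
  by apply: sub_in_span xT => v [k k_range kv]; exists k => //; move: k_range; lia.
apply: (big_ind (grade_sum _)) => [|u v|i _]; [exact: in_span0 | exact: in_spanD |].
exact: (grade_sum1 _ (grade_simple_rootvec (hes i))).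
Qed.

(* With S = S_+ + S_- and c = c_+ + c_-, invariance of the Killing form gives
   R_pairing x c S = K(c_+, [S_+, x]) - K(c_-, [S_-, x]); by height counting
   only the g_{-1} + g_0 part w of [S_+, x] contributes, and K(c_-, w) = 0. *)
Lemma R_pairing_killing_dual x S : T (x - e) ->
  exists2 w, T w & forall c, R_pairing br Pp x c S = killing br w c.
Proof.
move=> xT; have x_span := toda_grade_sum xT.
have [Sp_span Sm_span] := hPp S; set Sp := S *m Pp in Sp_span Sm_span *.
have Spx_span : grade_sum (fun k => -1 <= k) (br Sp x).
  by apply: (grade_sum_bracket hL hC hR _ Sp_span x_span) => i j; lia.
have range_split (k : int) : -1 <= k -> ((k == -1) || (k == 0)) || (1 <= k) by lia.
have [w [a [Spx_split w_span a_span]]] := grade_sum_split range_split Spx_span.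
set B := br (S - Sp) x.
have B_span : grade_sum (fun k => k <= 0) B.
  by apply: (grade_sum_bracket hL hC hR _ Sm_span x_span) => i j; lia.
exists w => // c; have [cp_span cm_span] := hPp c.
set cp := c *m Pp in cp_span cm_span *; set cm := c - cp in cm_span *.
have cp_a : killing br cp a = 0.
  by apply: (grade_sum_orthogonal hL hC hR _ cp_span a_span) => i j; lia.
have cm_B : killing br cm B = 0.
  by apply: (grade_sum_orthogonal hL hC hR _ cm_span B_span) => i j; lia.
have cm_w : killing br cm w = 0.
  by apply: (grade_sum_orthogonal hL hC hR _ cm_span w_span) => i j; lia.
have Kx u v : killing br x (br u v) = killing br u (br v x).
  by rewrite killing_sym (killing_invariant hL).
have Sx : br S x = w + a + B by rewrite -Spx_split -(lieDl hL) addrC subrK.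
have RSx : br (Rop Pp S) x = w + a - B by rewrite /Rop (lieBl hL) Spx_split.
have cE : c = cp + cm by rewrite addrC subrK.
rewrite /R_pairing (killingDr hL) !Kx Sx RSx /Rop -/cp -/cm [RHS]killing_sym.
clearbody cm cp; rewrite cE.
rewrite !(killingDl hL, killingNl hL, killingDr hL, killingNr hL) cp_a cm_B cm_w.
by field.
Qed.

Hypothesis hS : lie_simple br.

Lemma R_pairing_dual_grade x S : T (x - e) -> T (R_pairing_dual br Pp x S).
Proof.
move=> xT; have [w wT wE] := R_pairing_killing_dual S xT.
have [K_unit | K0] := killing_gram_unit_or_0 hL hS.
  suff -> : R_pairing_dual br Pp x S = w by [].
  apply/rowP => j; rewrite mxE wE (killing_gramE hL) trmx_mul trmx_inv.
  rewrite (gram_tr (killing_sym br)) mulmxA -(mulmxA w) (mulmxV K_unit) mulmx1.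
  by rewrite trmx_delta -colE mxE.
suff -> : R_pairing_dual br Pp x S = 0 by apply: in_span0.
by apply/rowP => j; rewrite !mxE wE (killing_gramE hL) K0 mulmx0 mul0mx mxE.
Qed.

End TodaTangency.

Section HomogeneousPolynomials.
Variables (F : numFieldType) (n : nat).

Lemma evp_homog (d : nat) (P : {mpoly F[n]}) (c : F) (x : 'rV[F]_n) :
  P \is d.-homog -> evp P (c *: x) = c ^+ d * evp P x.
Proof.
move=> P_homog; rewrite /evp !mevalE mulr_sumr; apply: eq_big_seq => m m_supp.
under eq_bigr => i _ do rewrite mxE exprMn.
by rewrite big_split /= prodrXr -mdegE (dhomog_mf P_homog m_supp); ring.
Qed.

Lemma polyfun_coef_eq0 (N : nat) (E : nat -> F) :
  (forall lam : F, \sum_(k < N) E k * lam ^+ k = 0) -> forall k, (k < N)%N -> E k = 0.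
Proof.
move=> E0 k k_lt_N.
have p0 : \poly_(i < N) E i = 0.
  apply: (@roots_geq_poly_eq0 _ _ [seq i%:R | i <- iota 0 N]).
  - by apply/allP => r /mapP [i _ ->]; rewrite /root horner_poly E0.
  - by rewrite map_inj_uniq ?iota_uniq // => a b /eqP; rewrite eqr_nat => /eqP.
  - by rewrite size_map size_iota size_poly.
by have := congr1 (fun p : {poly F} => p`_k) p0; rewrite coef_poly k_lt_N coef0.
Qed.

(* P(lam x - x) = (lam - 1)^d P(x); compare coefficients of lam^k. *)
Lemma homog_shift_coef (d : nat) (P : {mpoly F[n]}) (G : nat -> F) (x : 'rV[F]_n) :
  P \is d.-homog ->
  (forall lam : F, evp P (lam *: x - x) =
                   \sum_(k < d.+1) (-1) ^+ (d - k) * lam ^+ k * G k) ->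
  forall k, (k <= d)%N -> G k = 'C(d, k)%:R * evp P x.
Proof.
move=> P_homog PG k k_le_d.
pose E k := (-1) ^+ (d - k) * (G k - 'C(d, k)%:R * evp P x).
suff /eqP : E k = 0 by rewrite mulf_eq0 signr_eq0 subr_eq0 => /eqP.
apply: (@polyfun_coef_eq0 d.+1) => // lam; have := PG lam.
have -> : lam *: x - x = (lam - 1) *: x by rewrite scalerBl scale1r.
rewrite (evp_homog _ _ P_homog) addrC exprDn.
rewrite mulr_suml /E => binom.
under eq_bigr => i _ do rewrite mulrBr mulrBl.
rewrite sumrB (eq_bigr (fun i : 'I_d.+1 => (-1) ^+ (d - i) * lam ^+ i * G i)).
  rewrite -binom; apply/eqP; rewrite subr_eq0; apply/eqP/eq_bigr => i _.
  by rewrite -mulr_natr; ring.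
by move=> i _; ring.
Qed.

End HomogeneousPolynomials.

Unset Implicit Arguments.
Theorem theorem3p16
  (R : realType) (n l : nat)
  (br : 'rV[R[i]]_n -> 'rV[R[i]]_n -> 'rV[R[i]]_n)
  (H : 'M[R[i]]_n) (alpha : 'I_l -> 'cV[R[i]]_n) (es : 'I_l -> 'rV[R[i]]_n)
  (Pp : 'M[R[i]]_n)
  (P : 'I_l -> {mpoly R[i][n]}) (m : 'I_l -> nat)
  (Fam : 'I_l -> nat -> 'rV[R[i]]_n -> 'rV[R[i]]_n -> R[i]) :
  lie_bracket br ->
  lie_simple br ->
  cartan_subalgebra br H ->
  \rank H = l ->
  simple_roots br H alpha ->
  (forall i, es i != 0 /\ rootvec br H (alpha i) (es i)) ->
  is_proj_plus br H alpha Pp ->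
  invariant_generators br P m ->
  (forall (i : 'I_l) (lam : R[i]) (x y : 'rV[R[i]]_n),
     evp (P i) (lam *: x - y) =
     \sum_(k < (m i).+2) (-1) ^+ ((m i).+1 - k) * lam ^+ k * Fam i k x y) ->
  let e := \sum_(i < l) es i in
  let Tdir := grade_sum br H alpha (fun k => (k == -1) || (k == 0)) in
  let inT := fun x => Tdir (x - e) in
  let inT2 := fun u : 'rV[R[i]]_(n + n) =>
                lsubmx u = rsubmx u /\ Tdir (lsubmx u - e) in
  poisson_submanifold (calR_bracket br Pp) (row_mx e e)
        (fun w => lsubmx w = rsubmx w /\ Tdir (lsubmx w)) /\
  [/\
      (forall x, inT x -> inT2 (row_mx x x)),
      (forall x y, inT x -> inT y -> row_mx x x = row_mx y y -> x = y),
      (forall u, inT2 u -> exists2 x, inT x & u = row_mx x x),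
      (forall (Q1 Q2 : {mpoly R[i][n + n]}) x, inT x ->
         R_bracket br Pp (pull_diag Q1) (pull_diag Q2) x
         = calR_bracket br Pp Q1 Q2 (row_mx x x)) &
      (forall (i : 'I_l) (k : nat) x, (k <= (m i).+1)%N -> inT x ->
         Fam i k x x = ('C((m i).+1, k))%:R * evp (P i) x)].
Proof.
move=> hL hS hC _ hR hes hPp [_ P_homog _ _] Fam_expansion e Tdir inT inT2.
have es_root i : rootvec br H (alpha i) (es i) by have [] := hes i.
split.
  move=> Q u; rewrite -(hsubmxK u) opp_row_mx add_row_mx !row_mxKl !row_mxKr.
  move=> [diag_shift xT]; have <- : lsubmx u = rsubmx u by apply: (addIr (- e)).
  rewrite (ham_calR_diag hL) row_mxKl row_mxKr; split=> //.
  exact: (R_pairing_dual_grade hL hC hR es_root hPp hS).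
split.
- by move=> x xT; rewrite /inT2 row_mxKl row_mxKr.
- by move=> x y _ _ /(congr1 lsubmx); rewrite !row_mxKl.
- by move=> u [diag uT]; exists (lsubmx u); rewrite // -{1}(hsubmxK u) diag.
- by move=> Q1 Q2 x _; apply: R_bracket_pull_diag.
- by move=> i k x k_le _; apply: (homog_shift_coef (G := fun k => Fam i k x x) (P_homog i)).
Qed.
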